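(* Let $m\geq n\geq 6$ and $S\subseteq V(K_m\Box K_n)$. If every row and every column of $K_m\Box K_n$ contains at least two elements of $S$ and every quadruple contains at least one element of $S$, then $S$ is a $\{2\}$-resolving set of $K_m\Box K_n$.
   Context: $K_m\Box K_n$ has vertices $av$ with $a\in V(K_m)$, $v\in V(K_n)$; distinct $av,bu$ are adjacent iff $a=b$ or $u=v$. A column is a set $\{au: u\in V(K_n)\}$ for fixed $a$; a row is a set $\{au: a\in V(K_m)\}$ for fixed $u$. A quadruple is a set $\{av,au,bv,bu\}$ with $a\neq b$, $u\neq v$. $d$ is the shortest-path distance, $d(s,X)=\min_{x\in X}d(s,x)$, $\mathcal{D}_S(X)=(d(s_1,X),\dots,d(s_k,X))$ for $S=\{s_1,\dots,s_k\}$. $S$ is a $\{2\}$-resolving set if $\mathcal{D}_S(X)\neq\mathcal{D}_S(Y)$ for all distinct nonempty vertex sets $X,Y$ with $|X|,|Y|\leq 2$. *)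

From mathcomp Require Import all_boot.
Set Implicit Arguments. Unset Strict Implicit. Unset Printing Implicit Defensive.

(* Vertices of K_m \Box K_n: pairs (a, v) with a : 'I_m (column index),
   v : 'I_n (row index). *)
Notation vtx m n := (prod (ordinal m) (ordinal n)).

Definition adj (m n : nat) (x y : vtx m n) : bool :=
  (x != y) && ((x.1 == y.1) || (x.2 == y.2)).

Fixpoint reach (m n : nat) (k : nat) (x : vtx m n) : {set vtx m n} :=
  if k is k'.+1 then
    reach k' x :|: [set y | [exists z in reach k' x, adj z y]]
  else [set x].

(* Shortest-path distance: the least k such that y is reachable within k steps
   (searched among 0 .. #|V|; the graph is connected, so it is always found). *)
Definition dist (m n : nat) (x y : vtx m n) : nat :=
  find (fun k => y \in reach k x) (iota 0 #|[set: vtx m n]|.+1).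

(* d(s, X) = min_{x in X} d(s, x)  (only used for nonempty X). *)
Definition dist_set (m n : nat) (s : vtx m n) (X : {set vtx m n}) : nat :=
  \big[minn/#|[set: vtx m n]|.+1]_(x in X) dist s x.

Definition column (m n : nat) (a : 'I_m) : {set vtx m n} := [set x | x.1 == a].
Definition row (m n : nat) (u : 'I_n) : {set vtx m n} := [set x | x.2 == u].

Definition quadruple (m n : nat) (a b : 'I_m) (u v : 'I_n) : {set vtx m n} :=
  [set (a, v); (a, u); (b, v); (b, u)].

(* S is a {2}-resolving set: the distance vectors D_S(X) differ for all distinct
   nonempty X, Y with |X|, |Y| <= 2.  D_S(X) is represented as the function
   s |-> d(s, X) on S. *)
Definition two_resolving (m n : nat) (S : {set vtx m n}) : Prop :=
  forall X Y : {set vtx m n},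
    X != set0 -> Y != set0 -> #|X| <= 2 -> #|Y| <= 2 -> X != Y ->
    exists2 s, s \in S & dist_set s X != dist_set s Y.

(* Distances in K_m \Box K_n are Hamming distances on coordinate pairs, so whether
   a vertex resolves X = {x1, x2} from Y = {y1, y2} depends only on how its column
   and row compare with the at most four columns and four rows occurring in X and Y;
   all other columns (rows) behave alike.  If no vertex of S resolves X from Y, the
   set of unresolving vertices contains S and hence also meets every row and column
   twice and every quadruple.  Restricting it to the occurring columns and rows plus
   two spare ones and relabelling turns this into the same situation on K_6 \Box K_6,
   with X and Y in a 4 x 4 corner, where a finite computation shows X = Y. *)

From HB Require Import structures.
From mathcomp Require Import all_boot zify.

Set Implicit Arguments. Unset Strict Implicit. Unset Printing Implicit Defensive.

Lemma neq_triangle (T : eqType) (a b c : T) : (a != c) <= (a != b) + (b != c).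
Proof. by case: (a =P b) => [->|_] //=; case: (a != c). Qed.

Lemma eq_nth_index (T : eqType) (x0 c : T) s i :
  uniq s -> i < size s -> c \in s -> (nth x0 s i == c) = (i == index c s).
Proof. by move=> us si cs; rewrite -(nth_uniq x0 si) ?index_mem ?nth_index. Qed.

Lemma nth_inj_in_iota (T : eqType) (x0 : T) s :
  uniq s -> {in iota 0 (size s) &, injective (nth x0 s)}.
Proof.
move=> us i j; rewrite !mem_iota => /andP[_ si] /andP[_ sj] /eqP.
by rewrite nth_uniq // => /eqP.
Qed.

Lemma card_pred_count (T : finType) (P : pred T) : #|[pred a | P a]| = count P (enum T).
Proof.
rewrite -size_filter; have /card_uniqP <- : uniq (filter P (enum T)).
  by rewrite filter_uniq ?enum_uniq.
by apply: eq_card => a; rewrite mem_filter mem_enum andbT.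
Qed.

Lemma set2_of_card_le2 (T : finType) (X : {set T}) :
  X != set0 -> #|X| <= 2 -> exists x1 x2, X = [set x1; x2].
Proof.
rewrite -card_gt0 => X0 X2.
have [/eqP/cards1P[x ->]|X1] := eqVneq #|X| 1; first by exists x, x; rewrite setUid.
have /cards2P[x1 [x2 [_ ->]]] : #|X| == 2 by lia.
by exists x1, x2.
Qed.

Definition hamming (A B : eqType) (x y : A * B) : nat := (x.1 != y.1) + (x.2 != y.2).

Section Hamming.
Variables A B : eqType.
Implicit Types x y z : A * B.

Lemma hamming_le2 x y : hamming x y <= 2.
Proof. by rewrite /hamming; case: (_ != _); case: (_ != _). Qed.

Lemma hamming_eq0 x y : (hamming x y == 0) = (x == y).
Proof.
by case: x y => [a u] [b v]; rewrite /hamming addn_eq0 !eqb0 !negbK xpair_eqE.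
Qed.

Lemma hamming_triangle x y z : hamming x z <= hamming x y + hamming y z.
Proof. by rewrite /hamming addnACA leq_add ?neq_triangle. Qed.

Lemma hamming_nth (s : seq A) (t : seq B) a0 b0 i j x :
  uniq s -> uniq t -> i < size s -> j < size t -> x.1 \in s -> x.2 \in t ->
  hamming (nth a0 s i, nth b0 t j) x = hamming (i, j) (index x.1 s, index x.2 t).
Proof. by move=> *; rewrite /hamming /= !eq_nth_index. Qed.

End Hamming.

Lemma adj_hamming m n (x y : vtx m n) : adj x y = (hamming x y == 1).
Proof.
case: x y => [a u] [b v]; rewrite /adj /hamming xpair_eqE /=.
by case: eqP; case: eqP.
Qed.

Lemma reach_hamming m n k (x y : vtx m n) : (y \in reach k x) = (hamming x y <= k).
Proof.
elim: k y => [|k IHk] y /=; first by rewrite inE leqn0 hamming_eq0 eq_sym.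
rewrite !inE IHk; apply/idP/idP => [/orP[/leqW //|/exists_inP[z]]|].
  rewrite IHk adj_hamming => xz /eqP zy.
  by rewrite (leq_trans (hamming_triangle x z y)) // zy addn1.
rewrite leq_eqVlt ltnS => /orP[/eqP xy|->//]; apply/orP; right; apply/exists_inP.
have [e1|n1] := eqVneq x.1 y.1.
  have k0 : k = 0 by move: xy; rewrite /hamming e1 eqxx /=; case: (_ != _) => // -[].
  by exists x; rewrite ?IHk ?adj_hamming /hamming ?eqxx // -/(hamming x y) xy k0.
exists (x.1, y.2); rewrite ?IHk ?adj_hamming /hamming /= ?eqxx ?n1 //.
by move: xy; rewrite /hamming n1 => -[<-].
Qed.

Lemma find_leq_iota h L : h < L -> find (leq h) (iota 0 L) = h.
Proof.
move=> hL; rewrite -(subnKC (ltnW hL)) iotaD find_cat size_iota add0n.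
have -> : has (leq h) (iota 0 h) = false.
  by apply/hasP => -[k]; rewrite mem_iota add0n => /andP[_ kh]; rewrite leqNgt kh.
by rewrite -(subnSK hL) /= leqnn addn0.
Qed.

Lemma dist_hamming m n (x y : vtx m n) : dist x y = hamming x y.
Proof.
rewrite /dist (eq_find (a2 := leq (hamming x y))) => [|k]; last exact: reach_hamming.
apply: find_leq_iota; rewrite ltnS.
have [->|xy] := eqVneq x y; first by rewrite /hamming !eqxx.
have := subset_leq_card (subsetT [set x; y]); rewrite cards2 xy.
exact: leq_trans (hamming_le2 x y).
Qed.

(* [minn] has no unit on nat; a commutative semigroup law is enough for [bigD1]. *)
HB.instance Definition _ := SemiGroup.isComLaw.Build nat minn minnA minnC.

Lemma dist_set2 m n (s x1 x2 : vtx m n) :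
  dist_set s [set x1; x2] = minn (hamming s x1) (hamming s x2).
Proof.
rewrite /dist_set; apply/eqP; rewrite eqn_leq; apply/andP; split.
  rewrite leq_min; apply/andP; split.
    by rewrite (bigD1 x1) ?inE ?eqxx //= dist_hamming geq_minl.
  by rewrite (bigD1 x2) ?inE ?eqxx ?orbT //= dist_hamming geq_minl.
apply: (big_ind (fun v => minn (hamming s x1) (hamming s x2) <= v)).
- have : 0 < #|[set: vtx m n]| by apply/card_gt0P; exists s; rewrite inE.
  by have := hamming_le2 s x1; lia.
- by move=> a b ha hb; rewrite leq_min ha hb.
- by move=> z; rewrite !inE dist_hamming => /orP[]/eqP->; rewrite ?geq_minl ?geq_minr.
Qed.

Definition unresolving (A B : eqType) (x1 x2 y1 y2 : A * B) : pred (A * B) :=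
  fun p => minn (hamming p x1) (hamming p x2) == minn (hamming p y1) (hamming p y2).

Section Unresolving.
Variables (A B : eqType) (x1 x2 y1 y2 : A * B).

Lemma unresolving_fst a b u :
  a \notin [:: x1.1; x2.1; y1.1; y2.1] -> b \notin [:: x1.1; x2.1; y1.1; y2.1] ->
  unresolving x1 x2 y1 y2 (a, u) = unresolving x1 x2 y1 y2 (b, u).
Proof.
rewrite !inE !negb_or => /and4P[a1 a2 a3 a4] /and4P[b1 b2 b3 b4].
by rewrite /unresolving /hamming /= a1 a2 a3 a4 b1 b2 b3 b4.
Qed.

Lemma unresolving_snd a u v :
  u \notin [:: x1.2; x2.2; y1.2; y2.2] -> v \notin [:: x1.2; x2.2; y1.2; y2.2] ->
  unresolving x1 x2 y1 y2 (a, u) = unresolving x1 x2 y1 y2 (a, v).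
Proof.
rewrite !inE !negb_or => /and4P[u1 u2 u3 u4] /and4P[v1 v2 v3 v4].
by rewrite /unresolving /hamming /= u1 u2 u3 u4 v1 v2 v3 v4.
Qed.

End Unresolving.

(* The hypotheses of the theorem, for the subgrid s x t. *)
Definition dense_on (A B : eqType) (s : seq A) (t : seq B) (E : pred (A * B)) : bool :=
  [&& all (fun u => 1 < count (fun a => E (a, u)) s) t,
      all (fun a => 1 < count (fun u => E (a, u)) t) s &
      all (fun a => all (fun b => all (fun u => all (fun v =>
        (a != b) && (u != v) ==> [|| E (a, v), E (a, u), E (b, v) | E (b, u)]) t) t) s) s].

Section DenseOn.
Variables A B : eqType.
Implicit Types (s : seq A) (t : seq B) (E : pred (A * B)).

Lemma dense_onW s t E E' : subpred E E' -> dense_on s t E -> dense_on s t E'.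
Proof.
move=> EE' /and3P[rows cols quads]; apply/and3P; split.
- by apply: sub_all rows => u /leq_trans; apply; apply: sub_count => a /EE'.
- by apply: sub_all cols => a /leq_trans; apply; apply: sub_count => u /EE'.
apply: sub_all quads => a; apply: sub_all => b; apply: sub_all => u; apply: sub_all => v.
by move=> /implyP quad; apply/implyP => /quad /or4P[] /EE' ->; rewrite ?orbT.
Qed.

Lemma eq_in_dense_on s t E E' :
  {in s & t, forall a u, E (a, u) = E' (a, u)} -> dense_on s t E = dense_on s t E'.
Proof.
move=> EE'; congr [&& _, _ & _].
- by apply: eq_in_all => u ut; congr (1 < _); apply: eq_in_count => a sa; apply: EE'.
- by apply: eq_in_all => a sa; congr (1 < _); apply: eq_in_count => u ut; apply: EE'.
apply: eq_in_all => a sa; apply: eq_in_all => b sb.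
by apply: eq_in_all => u ut; apply: eq_in_all => v vt; rewrite !EE'.
Qed.

Lemma dense_on_map (A' B' : eqType) (f : A' -> A) (g : B' -> B)
    (s : seq A') (t : seq B') E :
  {in s &, injective f} -> {in t &, injective g} ->
  dense_on (map f s) (map g t) E = dense_on s t (fun p => E (f p.1, g p.2)).
Proof.
move=> injf injg; rewrite /dense_on !all_map; congr [&& _, _ & _].
- by apply: eq_all => u; rewrite /= count_map.
- by apply: eq_all => a; rewrite /= count_map.
apply: eq_in_all => a sa; rewrite /= all_map; apply: eq_in_all => b sb.
rewrite /= all_map; apply: eq_in_all => u ut; rewrite /= all_map; apply: eq_in_all => v vt.
by rewrite /= (inj_in_eq injf) // (inj_in_eq injg).
Qed.

End DenseOn.

Lemma count_gt1_sub (T : eqType) (P : pred T) (cs s s' : seq T) :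
  uniq s -> (forall a b, a \notin cs -> b \notin cs -> P a = P b) ->
  {subset cs <= s'} -> 1 < count [predC cs] s' -> 1 < count P s -> 1 < count P s'.
Proof.
move=> us Pcs cs_s' s'cs sP.
have [/hasP[a _ /andP[Pa a_cs]]|no_out] := boolP (has (predI P [predC cs]) s).
  by apply: leq_trans s'cs (sub_count _ _) => b b_cs; rewrite (Pcs b a).
apply: leq_trans sP _; rewrite -!size_filter uniq_leq_size ?filter_uniq // => a.
rewrite !mem_filter => /andP[Pa sa]; rewrite Pa cs_s' //.
by apply: contraNT no_out => a_cs; apply/hasP; exists a => //; apply/andP.
Qed.

Lemma dense_on_sub (A B : finType) (s cs : seq A) (t rs : seq B) (E : pred (A * B)) :
  {subset cs <= s} -> 1 < count [predC cs] s ->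
  {subset rs <= t} -> 1 < count [predC rs] t ->
  (forall a b u, a \notin cs -> b \notin cs -> E (a, u) = E (b, u)) ->
  (forall a u v, u \notin rs -> v \notin rs -> E (a, u) = E (a, v)) ->
  dense_on (enum A) (enum B) E -> dense_on s t E.
Proof.
move=> cs_s s_cs rs_t t_rs Ecs Ers /and3P[rows cols quads]; apply/and3P; split.
- apply/allP => u _; apply: count_gt1_sub (enum_uniq _) _ cs_s s_cs _ => [a b|].
    exact: Ecs.
  by move/allP: rows; apply; rewrite mem_enum.
- apply/allP => a _; apply: count_gt1_sub (enum_uniq _) _ rs_t t_rs _ => [u v|].
    exact: Ers.
  by move/allP: cols; apply; rewrite mem_enum.
apply/allP => a _; apply/allP => b _; apply/allP => u _; apply/allP => v _.
move/allP: quads => /(_ a (mem_enum _ _))/allP/(_ b (mem_enum _ _)).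
by move=> /allP/(_ u (mem_enum _ _))/allP/(_ v (mem_enum _ _)).
Qed.

(* [undup] keeps last occurrences, hence [rev (undup (rev s))] keeps first ones. *)
Lemma index_rev_undup_rev (T : eqType) (s : seq T) x :
  index x (rev (undup (rev s))) <= index x s.
Proof.
elim/last_ind: s => [|s y IHs] //; set u := rev (undup (rev s)).
have mem_u : u =i s by move=> z; rewrite mem_rev mem_undup mem_rev.
have size_u : size u <= size s by rewrite size_rev (leq_trans (size_undup _)) ?size_rev.
rewrite rev_rcons /= mem_rev -cats1 index_cat.
have [xs|xs] := boolP (x \in s).
  by case: ifP => _ //; rewrite rev_cons -cats1 index_cat mem_u xs.
case: ifP => _; last by rewrite rev_cons -cats1 index_cat mem_u (negbTE xs) leq_add2r.
by rewrite memNindex ?mem_u // (leq_trans size_u) ?leq_addr.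
Qed.

Lemma count_notin_uniq (T : eqType) (cs s : seq T) :
  uniq s -> size s - size cs <= count [predC cs] s.
Proof.
move=> us; rewrite -(count_predC [in cs]) leq_subLR leq_add2r.
by rewrite -size_filter uniq_leq_size ?filter_uniq // => a; rewrite mem_filter => /andP[].
Qed.

Lemma exists_relabel (A : finType) (cs : seq A) (k : nat) :
  size cs <= k <= #|A| ->
  exists s : seq A, [/\ uniq s, size s = k, {subset cs <= s},
    k - size cs <= count [predC cs] s & forall i c, c \in take i cs -> index c s < i].
Proof.
move=> /andP[csk kA]; set u := rev (undup (rev cs)).
set rest := [seq a <- enum A | a \notin cs].
have mem_u : u =i cs by move=> z; rewrite mem_rev mem_undup mem_rev.
have uniq_u : uniq u by rewrite rev_uniq undup_uniq.
have size_u : size u <= size cs by rewrite size_rev (leq_trans (size_undup _)) ?size_rev.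
have size_rest : #|A| <= size u + size rest.
  rewrite cardE -size_cat uniq_leq_size ?enum_uniq // => a _.
  by rewrite mem_cat mem_u mem_filter mem_enum andbT orbN.
have uniq_s : uniq (u ++ take (k - size u) rest).
  rewrite cat_uniq uniq_u take_uniq ?andbT; last by rewrite filter_uniq ?enum_uniq.
  by apply/hasPn => a /mem_take; rewrite mem_filter mem_u => /andP[].
have size_s : size (u ++ take (k - size u) rest) = k.
  rewrite size_cat size_takel ?subnKC ?(leq_trans size_u) //.
  by rewrite leq_subLR (leq_trans kA).
exists (u ++ take (k - size u) rest); split=> //.
- by move=> c csc; rewrite mem_cat mem_u csc.
- by rewrite -{1}size_s count_notin_uniq.
move=> i c c_cs; have csc : c \in cs := mem_take c_cs.
rewrite index_cat mem_u csc (leq_ltn_trans (index_rev_undup_rev _ _)) //.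
exact: index_ltn.
Qed.

Definition index2 (A B : eqType) (s : seq A) (t : seq B) (x : A * B) : nat * nat :=
  (index x.1 s, index x.2 t).

Lemma dense_on_index2 (A B : eqType) (s : seq A) (t : seq B) (x1 x2 y1 y2 : A * B) :
  uniq s -> uniq t ->
  {subset [:: x1.1; x2.1; y1.1; y2.1] <= s} -> {subset [:: x1.2; x2.2; y1.2; y2.2] <= t} ->
  dense_on s t (unresolving x1 x2 y1 y2) ->
  dense_on (iota 0 (size s)) (iota 0 (size t))
    (unresolving (index2 s t x1) (index2 s t x2) (index2 s t y1) (index2 s t y2)).
Proof.
move=> us ut cs_s rs_t.
have /and5P[x1s x2s y1s y2s _] : all (fun c => c \in s) [:: x1.1; x2.1; y1.1; y2.1].
  by apply/allP.
have /and5P[x1t x2t y1t y2t _] : all (fun c => c \in t) [:: x1.2; x2.2; y1.2; y2.2].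
  by apply/allP.
rewrite -{1}(mkseq_nth x1.1 s) -{1}(mkseq_nth x1.2 t) /mkseq.
rewrite dense_on_map; [|exact: nth_inj_in_iota..].
move=> dense_map; rewrite -(eq_in_dense_on
  (E := fun p => unresolving x1 x2 y1 y2 (nth x1.1 s p.1, nth x1.2 t p.2))) //.
move=> i j; rewrite !mem_iota => /andP[_ si] /andP[_ tj].
by rewrite /= /unresolving !hamming_nth.
Qed.

(* Coordinates are numbered by first appearance along x1, x2, y1, y2 (see
   [exists_relabel]), whence the bounds; the check covers 576 configurations. *)
Lemma grid6_unresolving (i2 j2 i3 j3 i4 j4 : nat) :
  i2 < 2 -> j2 < 2 -> i3 < 3 -> j3 < 3 -> i4 < 4 -> j4 < 4 ->
  dense_on (iota 0 6) (iota 0 6) (unresolving (0, 0) (i2, j2) (i3, j3) (i4, j4)) ->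
  [:: (0, 0); (i2, j2)] =i [:: (i3, j3); (i4, j4)].
Proof.
move=> i2_2 j2_2 i3_3 j3_3 i4_4 j4_4 dense.
pose square k := [seq (i, j) | i <- iota 0 k, j <- iota 0 k].
have square_ij k i j : i < k -> j < k -> (i, j) \in square k.
  by move=> ik jk; rewrite allpairs_f ?mem_iota.
have check : all (fun x2 => all (fun y1 => all (fun y2 =>
    dense_on (iota 0 6) (iota 0 6) (unresolving (0, 0) x2 y1 y2) ==>
    all (fun z => z \in [:: y1; y2]) [:: (0, 0); x2] &&
    all (fun z => z \in [:: (0, 0); x2]) [:: y1; y2])
  (square 4)) (square 3)) (square 2) by vm_compute.
move/allP/(_ _ (square_ij 2 _ _ i2_2 j2_2))/allP/(_ _ (square_ij 3 _ _ i3_3 j3_3)): check.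
move/allP/(_ _ (square_ij 4 _ _ i4_4 j4_4)); rewrite dense => /andP[/allP sub /allP sup] z.
by apply/idP/idP => [/sub|/sup].
Qed.

Lemma dense_unresolving_eq (A B : finType) (x1 x2 y1 y2 : A * B) :
  6 <= #|A| -> 6 <= #|B| ->
  dense_on (enum A) (enum B) (unresolving x1 x2 y1 y2) -> [set x1; x2] = [set y1; y2].
Proof.
move=> A6 B6 dense.
set cs := [:: x1.1; x2.1; y1.1; y2.1]; set rs := [:: x1.2; x2.2; y1.2; y2.2].
have [s [us s6 cs_s s_cs s_idx]] := @exists_relabel _ cs 6 A6.
have [t [ut t6 rs_t t_rs t_idx]] := @exists_relabel _ rs 6 B6.
have dense_st : dense_on s t (unresolving x1 x2 y1 y2).
  apply: dense_on_sub cs_s s_cs rs_t t_rs _ _ dense.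
    exact: unresolving_fst.
  exact: unresolving_snd.
have x1_00 : index2 s t x1 = (0, 0).
  move: (s_idx 1 x1.1) (t_idx 1 x1.2); rewrite /index2 !inE !eqxx !ltnS !leqn0.
  by move=> /(_ isT)/eqP -> /(_ isT)/eqP ->.
have dense6 := dense_on_index2 us ut cs_s rs_t dense_st.
rewrite s6 t6 x1_00 in dense6.
have eq_idx : [:: index2 s t x1; index2 s t x2] =i [:: index2 s t y1; index2 s t y2].
  rewrite x1_00; apply: grid6_unresolving dense6;
    by (apply: s_idx || apply: t_idx); rewrite !inE eqxx ?orbT.
move/(eq_mem_map (fun p => (nth x1.1 s p.1, nth x1.2 t p.2))): eq_idx.
rewrite /= !nth_index ?cs_s ?rs_t ?inE ?eqxx ?orbT // => eq_xy.
by apply/setP => z; move: (eq_xy z); rewrite !inE.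
Qed.

Section Grid.
Variables (m n : nat) (S : {set vtx m n}).

Lemma card_row_setI u : #|row m u :&: S| = count (fun a => (a, u) \in S) (enum 'I_m).
Proof.
have -> : row m u :&: S = [set (a, u) | a in [pred a | (a, u) \in S]].
  apply/setP => -[a v]; rewrite !inE; apply/andP/imsetP => [[/eqP /= -> aS]|[b bS [-> ->]]].
    by exists a.
  by rewrite eqxx.
by rewrite card_imset => [|a b [->]] //; rewrite card_pred_count.
Qed.

Lemma card_column_setI a : #|column n a :&: S| = count (fun u => (a, u) \in S) (enum 'I_n).
Proof.
have -> : column n a :&: S = [set (a, u) | u in [pred u | (a, u) \in S]].
  apply/setP => -[b u]; rewrite !inE; apply/andP/imsetP => [[/eqP /= -> uS]|[v vS [-> ->]]].
    by exists u.
  by rewrite eqxx.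
by rewrite card_imset => [|u v [->]] //; rewrite card_pred_count.
Qed.

Lemma quadruple_setI_neq0 a b u v :
  (quadruple a b u v :&: S != set0) =
  [|| (a, v) \in S, (a, u) \in S, (b, v) \in S | (b, u) \in S].
Proof.
apply/set0Pn/idP => [[p /setIP[]]|].
  by rewrite /quadruple !inE -!orbA => /or4P[]/eqP-> ->; rewrite ?orbT.
by case/or4P=> pS; [exists (a, v)|exists (a, u)|exists (b, v)|exists (b, u)];
  rewrite !inE pS ?eqxx ?orbT.
Qed.

Lemma dense_on_enum :
  (forall u, 2 <= #|row m u :&: S|) -> (forall a, 2 <= #|column n a :&: S|) ->
  (forall a b u v, a != b -> u != v -> quadruple a b u v :&: S != set0) ->
  dense_on (enum 'I_m) (enum 'I_n) (fun p => p \in S).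
Proof.
move=> rows cols quads; apply/and3P; split.
- by apply/allP => u _; rewrite -card_row_setI.
- by apply/allP => a _; rewrite -card_column_setI.
apply/allP => a _; apply/allP => b _; apply/allP => u _; apply/allP => v _.
by apply/implyP => /andP[ab uv]; rewrite -quadruple_setI_neq0 quads.
Qed.

End Grid.

Theorem mainTheorem12 (m n : nat) (S : {set vtx m n}) :
  6 <= n -> n <= m ->
  (forall u : 'I_n, 2 <= #|row m u :&: S|) ->
  (forall a : 'I_m, 2 <= #|column n a :&: S|) ->
  (forall (a b : 'I_m) (u v : 'I_n), a != b -> u != v ->
     quadruple a b u v :&: S != set0) ->
  two_resolving S.
Proof.
move=> n6 nm rows cols quads X Y X0 Y0 X2 Y2 XY.
have [x1 [x2 defX]] := set2_of_card_le2 X0 X2.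
have [y1 [y2 defY]] := set2_of_card_le2 Y0 Y2.
have [/exists_inP[s sS sXY]|no_s] := boolP [exists s in S, dist_set s X != dist_set s Y].
  by exists s.
have XY' : [set x1; x2] = [set y1; y2].
  apply: dense_unresolving_eq; rewrite ?card_ord ?(leq_trans n6 nm) //.
  apply: dense_onW (dense_on_enum rows cols quads) => s sS.
  apply: contraNT no_s => sXY; apply/exists_inP; exists s => //.
  by rewrite defX defY !dist_set2.
by rewrite defX defY XY' eqxx in XY.
Qed.
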